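(* Let $\mathbb{C}$ be a regular category which has finite 2-fold subobject decompositions. Then $\mathbb{C}$ has directly decomposable reflexive relations: for every reflexive relation $R$ on a product $X\times Y$, $R=R_1\times_T R_2$.
   Context: A category is regular if it has finite limits and coequalizers of kernel pairs and regular epimorphisms are pullback-stable; images of subobjects under morphisms are given by regular epi–mono factorizations. $\mathbb{C}$ has finite 2-fold subobject decompositions if for every positive integer $n$, all objects $A_1,\dots,A_n$ and all subobjects $S,T$ of $A_1\times\cdots\times A_n$: if for all $i,j\in\{1,\dots,n\}$ the images of $S$ and $T$ under $(\pi_i,\pi_j):A_1\times\cdots\times A_n\to A_i\times A_j$ coincide, then $S=T$. For a relation $R$ on $X\times Y$ (subobject of $(X\times Y)^2$), $R_1$ and $R_2$ are its images under the canonical projections $(X\times Y)^2\to X^2$ and $(X\times Y)^2\to Y^2$. If $r_1:R_{1,0}\to X\times X$ and $r_2:R_{2,0}\to Y\times Y$ represent $R_1,R_2$, then $R_1\times_T R_2$ is the relation on $X\times Y$ represented by the mono $\phi\circ(r_1\times r_2):R_{1,0}\times R_{2,0}\to(X\times Y)^2$, where $\phi:(X\times X)\times(Y\times Y)\to(X\times Y)^2$ is the canonical transpose isomorphism. A relation on $Z$ is reflexive if the diagonal of $Z$ factors through it. *)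

From mathcomp Require Import all_boot.
Set Implicit Arguments.
Unset Strict Implicit.
Unset Printing Implicit Defensive.

Record Category := {
  ob :> Type;
  hom : ob -> ob -> Type;
  comp : forall a b c : ob, hom b c -> hom a b -> hom a c;
  idm : forall a : ob, hom a a;
  comp_assoc : forall (a b c d : ob) (h : hom c d) (g : hom b c) (f : hom a b),
      comp h (comp g f) = comp (comp h g) f;
  comp_id_l : forall (a b : ob) (f : hom a b), comp (idm b) f = f;
  comp_id_r : forall (a b : ob) (f : hom a b), comp f (idm a) = f
}.
Arguments hom {C} : rename.
Arguments comp {C a b c} : rename.
Arguments idm {C} : rename.

(* comp g f = "g after f" *)

(* chosen binary products (any choice of products is fine: all notions below
   are invariant under isomorphism of products) *)
Record Products (C : Category) := {
  prod : C -> C -> C;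
  pr1 : forall A B : C, hom (prod A B) A;
  pr2 : forall A B : C, hom (prod A B) B;
  pair : forall (Z A B : C), hom Z A -> hom Z B -> hom Z (prod A B);
  pr1_pair : forall Z A B (f : hom Z A) (g : hom Z B), comp (pr1 A B) (pair f g) = f;
  pr2_pair : forall Z A B (f : hom Z A) (g : hom Z B), comp (pr2 A B) (pair f g) = g;
  pair_eta : forall Z A B (h : hom Z (prod A B)),
      h = pair (comp (pr1 A B) h) (comp (pr2 A B) h)
}.
Arguments prod {C} p : rename.
Arguments pr1 {C} p {A B} : rename.
Arguments pr2 {C} p {A B} : rename.
Arguments pair {C} p {Z A B} : rename.

Section Notions.
Variable C : Category.

Definition Mono {A B : C} (m : hom A B) : Prop :=
  forall (Z : C) (g h : hom Z A), comp m g = comp m h -> g = h.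

Definition IsTerminal (T : C) : Prop :=
  forall A : C, exists t : hom A T, forall t' : hom A T, t' = t.

Definition IsPullback {A B D P : C} (f : hom A D) (g : hom B D)
  (a : hom P A) (b : hom P B) : Prop :=
  comp f a = comp g b /\
  forall (Z : C) (x : hom Z A) (y : hom Z B), comp f x = comp g y ->
    exists u : hom Z P, (comp a u = x /\ comp b u = y) /\
      forall u' : hom Z P, comp a u' = x -> comp b u' = y -> u' = u.

Definition IsCoequalizer {K A Q : C} (u v : hom K A) (e : hom A Q) : Prop :=
  comp e u = comp e v /\
  forall (Z : C) (h : hom A Z), comp h u = comp h v ->
    exists k : hom Q Z, comp k e = h /\
      forall k' : hom Q Z, comp k' e = h -> k' = k.

Definition RegularEpi {A Q : C} (e : hom A Q) : Prop :=
  exists (K : C) (u v : hom K A), IsCoequalizer u v e.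

(* Regular category: finite limits (terminal object + pullbacks; binary
   products are given), coequalizers of kernel pairs, pullback-stable
   regular epimorphisms. *)
Definition Regular : Prop :=
  (exists T : C, IsTerminal T) /\
  (forall (A B D : C) (f : hom A D) (g : hom B D),
      exists (P : C) (a : hom P A) (b : hom P B), IsPullback f g a b) /\
  (forall (A D P : C) (f : hom A D) (a b : hom P A), IsPullback f f a b ->
      exists (Q : C) (e : hom A Q), IsCoequalizer a b e) /\
  (forall (A B D P : C) (e : hom A D) (g : hom B D) (a : hom P A) (b : hom P B),
      RegularEpi e -> IsPullback e g a b -> RegularEpi b).

Definition SameSub {A B D : C} (m : hom A D) (n : hom B D) : Prop :=
  (exists x : hom A B, comp n x = m) /\ (exists y : hom B A, comp m y = n).

(* n : I >-> Q represents the image of the subobject m : S >-> P under f,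
   i.e. f o m = n o e is a regular epi - mono factorization *)
Definition IsImage {S P Q I : C} (f : hom P Q) (m : hom S P) (n : hom I Q) : Prop :=
  Mono n /\ exists e : hom S I, RegularEpi e /\ comp f m = comp n e.

Variable Pr : Products C.
Local Notation "A × B" := (prod Pr A B) (at level 40, left associativity).

Definition IsNProduct (n : nat) (A : 'I_n -> C) (P : C) (pi : forall i, hom P (A i)) : Prop :=
  forall (Z : C) (f : forall i, hom Z (A i)),
    exists u : hom Z P, (forall i, comp (pi i) u = f i) /\
      forall u' : hom Z P, (forall i, comp (pi i) u' = f i) -> u' = u.

Definition Finite2FoldDecompositions : Prop :=
  forall (n : nat), 0 < n ->
  forall (A : 'I_n -> C) (P : C) (pi : forall i, hom P (A i)),
    IsNProduct pi ->
  forall (S T : C) (s : hom S P) (t : hom T P), Mono s -> Mono t ->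
    (forall i j : 'I_n, forall (IS IT : C) (ns : hom IS (A i × A j)) (nt : hom IT (A i × A j)),
        IsImage (pair Pr (pi i) (pi j)) s ns ->
        IsImage (pair Pr (pi i) (pi j)) t nt -> SameSub ns nt) ->
    SameSub s t.

Definition prod_map {A B A' B' : C} (f : hom A A') (g : hom B B') :
  hom (A × B) (A' × B') :=
  pair Pr (comp f (pr1 Pr)) (comp g (pr2 Pr)).

Definition diag (Z : C) : hom Z (Z × Z) := pair Pr (idm Z) (idm Z).

Definition ReflexiveRel {Z R0 : C} (r : hom R0 (Z × Z)) : Prop :=
  Mono r /\ exists d : hom Z R0, comp r d = diag Z.

Definition projX2 (X Y : C) : hom ((X × Y) × (X × Y)) (X × X) :=
  pair Pr (comp (pr1 Pr) (pr1 Pr)) (comp (pr1 Pr) (pr2 Pr)).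
Definition projY2 (X Y : C) : hom ((X × Y) × (X × Y)) (Y × Y) :=
  pair Pr (comp (pr2 Pr) (pr1 Pr)) (comp (pr2 Pr) (pr2 Pr)).

(* transpose isomorphism phi : (X×X)×(Y×Y) -> (X×Y)×(X×Y),
   ((x,x'),(y,y')) |-> ((x,y),(x',y')) *)
Definition transpose_iso (X Y : C) : hom ((X × X) × (Y × Y)) ((X × Y) × (X × Y)) :=
  pair Pr (pair Pr (comp (pr1 Pr) (pr1 Pr)) (comp (pr1 Pr) (pr2 Pr)))
          (pair Pr (comp (pr2 Pr) (pr1 Pr)) (comp (pr2 Pr) (pr2 Pr))).

(* R1 ×_T R2 represented by phi o (r1 × r2) *)
Definition relT {X Y R10 R20 : C} (r1 : hom R10 (X × X)) (r2 : hom R20 (Y × Y)) :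
  hom (R10 × R20) ((X × Y) × (X × Y)) :=
  comp (transpose_iso X Y) (prod_map r1 r2).

Definition DirectlyDecomposableReflexiveRelations : Prop :=
  forall (X Y R0 : C) (r : hom R0 ((X × Y) × (X × Y))), ReflexiveRel r ->
  forall (R10 R20 : C) (r1 : hom R10 (X × X)) (r2 : hom R20 (Y × Y)),
    IsImage (projX2 X Y) r r1 -> IsImage (projY2 X Y) r r2 ->
    SameSub r (relT r1 r2).

End Notions.

(* Since R projects onto R1 and R2, it is contained in R1 ×_T R2, so by the
   2-fold decomposition property it suffices that each image of R1 ×_T R2
   under a pair of the four coordinates x, y, x', y' of (X×Y)^2 lies in the
   corresponding image of R.  If both coordinates come from X, the pair
   factors through (X×Y)^2 -> X^2, under which R has image R1 and R1 ×_T R2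
   lands in R1; likewise for Y.  If one comes from X and the other from Y,
   the image of R is everything, because R contains the diagonal of X×Y.
   All comparisons of images rest on regular epimorphisms being orthogonal
   to monomorphisms. *)
From mathcomp Require Import all_boot.
Set Implicit Arguments.
Unset Strict Implicit.
Unset Printing Implicit Defensive.

Section Images.
Variable C : Category.

Definition Factors {A B D : C} (m : hom A D) (n : hom B D) : Prop :=
  exists x : hom A B, comp n x = m.

Lemma factors_comp {A B D E : C} (m : hom A D) (n : hom B D) (x : hom E A) :
  Factors m n -> Factors (comp m x) n.
Proof. by move=> [y <-]; exists (comp y x); rewrite comp_assoc. Qed.

Lemma regular_epi_orthogonal {A Q Z W : C} (e : hom A Q) (n : hom Z W)
    (a : hom A Z) (b : hom Q W) :
  RegularEpi e -> Mono n -> comp n a = comp b e ->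
  exists k : hom Q Z, comp n k = b /\ comp k e = a.
Proof.
move=> [K [u [v [e_coeq e_univ]]]] n_mono sq.
have a_coeq : comp a u = comp a v.
  by apply: n_mono; rewrite !comp_assoc sq -!comp_assoc e_coeq.
have [k [ke _]] := e_univ _ _ a_coeq.
exists k; split => //.
have be_coeq : comp (comp b e) u = comp (comp b e) v by rewrite -!comp_assoc e_coeq.
have [k' [_ uniq]] := e_univ _ _ be_coeq.
by rewrite (uniq b erefl) (uniq (comp n k)) // -comp_assoc ke.
Qed.

Section Image.
Variables (S P Q I : C) (f : hom P Q) (s : hom S P) (n : hom I Q).
Hypothesis im : IsImage f s n.

Lemma image_least (M : C) (m : hom M Q) :
  Mono m -> Factors (comp f s) m -> Factors n m.
Proof.
move: im => [_ [e [e_reg fac]]] m_mono [h mh].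
have [k [mk _]] := regular_epi_orthogonal e_reg m_mono (etrans mh fac).
by exists k.
Qed.

Lemma image_cover_factors (V : C) (g : hom V Q) (e : hom S V) :
  RegularEpi e -> comp f s = comp g e -> Factors g n.
Proof.
move: im => [n_mono [es [_ fac]]] e_reg cover.
have [k [nk _]] := regular_epi_orthogonal e_reg n_mono (etrans (esym fac) cover).
by exists k.
Qed.

Lemma image_full_of_section (sec : hom Q S) (B : C) (g : hom B Q) :
  comp (comp f s) sec = idm Q -> Factors g n.
Proof.
move: im => [_ [es [_ fac]]] sec_id.
exists (comp es (comp sec g)).
by rewrite !comp_assoc -fac sec_id comp_id_l.
Qed.

End Image.

Lemma image_monotone {S T P Q IS IT : C} (f : hom P Q) (s : hom S P) (t : hom T P)
    (ns : hom IS Q) (nt : hom IT Q) :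
  IsImage f s ns -> IsImage f t nt -> Factors s t -> Factors ns nt.
Proof.
move=> ims [nt_mono [et [_ fac]]] [a ta].
apply: (image_least ims nt_mono).
by exists (comp et a); rewrite comp_assoc -fac -comp_assoc ta.
Qed.

End Images.

Section Products.
Variables (C : Category) (Pr : Products C).
Local Notation "A × B" := (prod Pr A B) (at level 40, left associativity).

Lemma comp_pair (Z W A B : C) (f : hom Z A) (g : hom Z B) (h : hom W Z) :
  comp (pair Pr f g) h = pair Pr (comp f h) (comp g h).
Proof. by rewrite (pair_eta (comp (pair Pr f g) h)) !comp_assoc pr1_pair pr2_pair. Qed.

Lemma prod_hom_ext (Z A B : C) (a b : hom Z (A × B)) :
  comp (pr1 Pr) a = comp (pr1 Pr) b -> comp (pr2 Pr) a = comp (pr2 Pr) b -> a = b.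
Proof. by move=> eq1 eq2; rewrite (pair_eta a) (pair_eta b) eq1 eq2. Qed.

Ltac pair_simpl :=
  rewrite /relT /transpose_iso /prod_map /projX2 /projY2 /diag;
  repeat apply: prod_hom_ext;
  repeat rewrite ?comp_pair ?pr1_pair ?pr2_pair ?comp_id_l ?comp_id_r -?comp_assoc.

Lemma pair_pr (A B : C) : pair Pr (pr1 Pr) (pr2 Pr) = idm (A × B).
Proof. by pair_simpl. Qed.

Variables X Y : C.

Lemma transpose_projXY :
  comp (transpose_iso Pr X Y) (pair Pr (projX2 Pr X Y) (projY2 Pr X Y)) = idm _.
Proof. by pair_simpl. Qed.

Lemma projX2_relT (R10 R20 : C) (r1 : hom R10 (X × X)) (r2 : hom R20 (Y × Y)) :
  comp (projX2 Pr X Y) (relT r1 r2) = comp r1 (pr1 Pr).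
Proof. by pair_simpl. Qed.

Lemma projY2_relT (R10 R20 : C) (r1 : hom R10 (X × X)) (r2 : hom R20 (Y × Y)) :
  comp (projY2 Pr X Y) (relT r1 r2) = comp r2 (pr2 Pr).
Proof. by pair_simpl. Qed.

Lemma relT_mono (R10 R20 : C) (r1 : hom R10 (X × X)) (r2 : hom R20 (Y × Y)) :
  Mono r1 -> Mono r2 -> Mono (relT r1 r2).
Proof.
move=> r1_mono r2_mono Z g h eq_gh.
have eqX : comp (comp (projX2 Pr X Y) (relT r1 r2)) g =
           comp (comp (projX2 Pr X Y) (relT r1 r2)) h
    by rewrite -[LHS]comp_assoc -[RHS]comp_assoc eq_gh.
have eqY : comp (comp (projY2 Pr X Y) (relT r1 r2)) g =
           comp (comp (projY2 Pr X Y) (relT r1 r2)) h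
    by rewrite -[LHS]comp_assoc -[RHS]comp_assoc eq_gh.
rewrite projX2_relT -!comp_assoc in eqX; rewrite projY2_relT -!comp_assoc in eqY.
by apply: prod_hom_ext; [apply: r1_mono | apply: r2_mono].
Qed.

Lemma projX2_diag : comp (projX2 Pr X Y) (diag Pr (X × Y)) = comp (diag Pr X) (pr1 Pr).
Proof. by pair_simpl. Qed.

Lemma projY2_diag : comp (projY2 Pr X Y) (diag Pr (X × Y)) = comp (diag Pr Y) (pr2 Pr).
Proof. by pair_simpl. Qed.

(* Coordinate k of (X×Y)^2 = (x, y, x', y') lies in Y iff k is odd, and in the
   first factor iff k < 2. *)
Definition side (Z : C) (k : nat) : hom (Z × Z) Z := if k < 2 then pr1 Pr else pr2 Pr.

Lemma side_diag (Z : C) (k : nat) : comp (side Z k) (diag Pr Z) = idm Z.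
Proof. by rewrite /side /diag; case: (k < 2); rewrite ?pr1_pair ?pr2_pair. Qed.

Definition coord_ob (k : nat) : C := if odd k then Y else X.

Definition coord (k : nat) : hom ((X × Y) × (X × Y)) (coord_ob k) :=
  if odd k as b return hom _ (if b then Y else X)
  then comp (side Y k) (projY2 Pr X Y) else comp (side X k) (projX2 Pr X Y).

Lemma coord_product : IsNProduct (fun i : 'I_4 => coord i).
Proof.
move=> Z f.
pose o0 := @Ordinal 4 0 isT; pose o1 := @Ordinal 4 1 isT.
pose o2 := @Ordinal 4 2 isT; pose o3 := @Ordinal 4 3 isT.
exists (pair Pr (pair Pr (f o0) (f o1)) (pair Pr (f o2) (f o3))); split.
  case=> [[|[|[|[|k]]]] lt_k4] //; rewrite (bool_irrelevance lt_k4 isT) /coord /side /=;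
    by pair_simpl.
move=> u coord_u.
have := coord_u o0; have := coord_u o1; have := coord_u o2; have := coord_u o3.
rewrite /coord /side /= -!comp_assoc => <- <- <- <-.
by pair_simpl.
Qed.

Section ReflexiveRelation.
Variables (R0 R10 R20 : C) (r : hom R0 ((X × Y) × (X × Y))) (d : hom (X × Y) R0).
Variables (r1 : hom R10 (X × X)) (r2 : hom R20 (Y × Y)) (e1 : hom R0 R10) (e2 : hom R0 R20).
Hypothesis r_refl : comp r d = diag Pr (X × Y).
Hypotheses (e1_reg : RegularEpi e1) (e2_reg : RegularEpi e2).
Hypothesis r1_cover : comp (projX2 Pr X Y) r = comp r1 e1.
Hypothesis r2_cover : comp (projY2 Pr X Y) r = comp r2 e2.

Lemma relT_covers : Factors r (relT r1 r2).
Proof.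
exists (pair Pr e1 e2).
have -> : comp (relT r1 r2) (pair Pr e1 e2) =
          comp (transpose_iso Pr X Y) (pair Pr (comp r1 e1) (comp r2 e2)).
  by pair_simpl.
by rewrite -r1_cover -r2_cover -comp_pair comp_assoc transpose_projXY comp_id_l.
Qed.

Lemma factors_through_projX2 (Q : C) (h : hom (X × X) Q) (I : C) (n : hom I Q) :
  IsImage (comp h (projX2 Pr X Y)) r n ->
  Factors (comp (comp h (projX2 Pr X Y)) (relT r1 r2)) n.
Proof.
move=> im; rewrite -comp_assoc projX2_relT comp_assoc; apply: factors_comp.
by apply: (image_cover_factors im e1_reg); rewrite -comp_assoc r1_cover comp_assoc.
Qed.

Lemma factors_through_projY2 (Q : C) (h : hom (Y × Y) Q) (I : C) (n : hom I Q) :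
  IsImage (comp h (projY2 Pr X Y)) r n ->
  Factors (comp (comp h (projY2 Pr X Y)) (relT r1 r2)) n.
Proof.
move=> im; rewrite -comp_assoc projY2_relT comp_assoc; apply: factors_comp.
by apply: (image_cover_factors im e2_reg); rewrite -comp_assoc r2_cover comp_assoc.
Qed.

Lemma image_full_XY (k l : nat) (I : C) (n : hom I (X × Y)) (B : C) (g : hom B (X × Y)) :
  IsImage (pair Pr (comp (side X k) (projX2 Pr X Y)) (comp (side Y l) (projY2 Pr X Y))) r n ->
  Factors g n.
Proof.
move=> im; apply: (image_full_of_section (sec := d) im).
rewrite -comp_assoc r_refl comp_pair -!comp_assoc projX2_diag projY2_diag.
by rewrite !comp_assoc !side_diag !comp_id_l pair_pr.
Qed.

Lemma image_full_YX (k l : nat) (I : C) (n : hom I (Y × X)) (B : C) (g : hom B (Y × X)) :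
  IsImage (pair Pr (comp (side Y k) (projY2 Pr X Y)) (comp (side X l) (projX2 Pr X Y))) r n ->
  Factors g n.
Proof.
move=> im; apply: (image_full_of_section (sec := comp d (pair Pr (pr2 Pr) (pr1 Pr))) im).
rewrite comp_assoc -(comp_assoc _ r) r_refl comp_pair -!comp_assoc projX2_diag projY2_diag.
by rewrite !comp_assoc !side_diag !comp_id_l comp_pair pr1_pair pr2_pair pair_pr.
Qed.

Lemma coord_pair_relT_factors (i j : 'I_4) (I : C) (n : hom I (coord_ob i × coord_ob j)) :
  IsImage (pair Pr (coord i) (coord j)) r n ->
  Factors (comp (pair Pr (coord i) (coord j)) (relT r1 r2)) n.
Proof.
move: n; rewrite /coord /coord_ob; case: (odd i); case: (odd j) => n im.
- by rewrite -comp_pair in im *; apply: factors_through_projY2.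
- exact: image_full_YX im.
- exact: image_full_XY im.
- by rewrite -comp_pair in im *; apply: factors_through_projX2.
Qed.

End ReflexiveRelation.
End Products.

Theorem proposition4p8 (C : Category) (Pr : Products C) :
  Regular C -> Finite2FoldDecompositions Pr ->
  DirectlyDecomposableReflexiveRelations Pr.
Proof.
move=> _ decomp X Y R0 r [r_mono [d r_refl]] R10 R20 r1 r2 imX imY.
have [r1_mono [e1 [e1_reg r1_cover]]] := imX.
have [r2_mono [e2 [e2_reg r2_cover]]] := imY.
apply: (decomp 4 isT _ _ _ (@coord_product C Pr X Y) _ _ r _ r_mono (relT_mono r1_mono r2_mono)).
move=> i j IS IT ns nt ims imt; split.
  exact: image_monotone ims imt (relT_covers r1_cover r2_cover).
apply: (image_least imt ims.1).
exact (coord_pair_relT_factors r_refl e1_reg e2_reg r1_cover r2_cover ims).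
Qed.
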